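(* For every two-player stage game $G$: if $G\in\mathcal{G}_{LS}^{p,p}$ then $G\in\mathcal{G}_{LS}^{m,p}$; that is, $\mathcal{G}_{LS}^{p,p}\subseteq\mathcal{G}_{LS}^{m,p}$.
   Context: A two-player stage game $G$ has finite nonempty action sets $A_1,A_2$ and payoffs $u_1,u_2:A_1\times A_2\to\mathbb{R}$, extended to mixed strategies by expectation. $G(T)$ is the $T$-round repetition with realized actions observed each round and payoffs the expected sum of stage payoffs; an SPE of $G(T)$ is a strategy profile whose continuation after every history of length $k<T$ is a Nash equilibrium of $G(T-k)$. Regimes: pure-pure ($p,p$): both players restricted to actions (in the stage game and in every round, including deviations); mixed-pure ($m,p$): player 1 may mix, player 2 uses only actions; mixed-mixed ($m,m$): both may mix. For regime $r$, $\mathrm{Nash}^r(G)$ is the set of stage-game profiles available in $r$ from which no player can profitably deviate unilaterally to a strategy available in $r$. Locally suboptimal behavior occurs in an SPE $\mu$ of $G(T)$ (regime $r$) if for some history $h$ of length $k<T$, $(\mu_1(h),\mu_2(h))\notin\mathrm{Nash}^r(G)$. $\mathcal{G}_{LS}^r$ is the set of stage games $G$ for which there exist $T\ge1$ and an SPE of $G(T)$ in regime $r$ in which locally suboptimal behavior occurs. *)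

From HB Require Import structures.
From mathcomp Require Import all_boot all_order all_algebra.
From mathcomp Require Import reals.
Set Implicit Arguments. Unset Strict Implicit. Unset Printing Implicit Defensive.
Import Order.TTheory GRing.Theory Num.Theory.
Local Open Scope ring_scope.

(* Regimes: pure-pure, mixed-pure (player 1 mixes), mixed-mixed. *)
Inductive regime := PP | MP | MM.

Definition mixes1 (r : regime) : bool := if r is PP then false else true.
Definition mixes2 (r : regime) : bool := if r is MM then true else false.

Section Games.
Variables (R : realType) (A1 A2 : finType).

Definition is_mixed (A : finType) (x : {ffun A -> R}) : Prop :=
  (forall a, 0 <= x a) /\ \sum_(a : A) x a = 1.

(* Point mass at a (pure action as a degenerate mixed strategy). *)
Definition pt (A : finType) (a : A) : {ffun A -> R} :=
  [ffun b => if b == a then 1 else 0].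

Definition is_pure (A : finType) (x : {ffun A -> R}) : Prop :=
  exists a : A, x = pt a.

Definition avail (b : bool) (A : finType) (x : {ffun A -> R}) : Prop :=
  if b then is_mixed x else is_pure x.

Definition avail1 (r : regime) := @avail (mixes1 r) A1.
Definition avail2 (r : regime) := @avail (mixes2 r) A2.

Definition eu (u : A1 -> A2 -> R) (x1 : {ffun A1 -> R}) (x2 : {ffun A2 -> R}) : R :=
  \sum_(a1 : A1) \sum_(a2 : A2) x1 a1 * x2 a2 * u a1 a2.

Definition stageNash (r : regime) (u1 u2 : A1 -> A2 -> R)
    (x1 : {ffun A1 -> R}) (x2 : {ffun A2 -> R}) : Prop :=
  [/\ avail1 r x1, avail2 r x2,
      (forall y1, avail1 r y1 -> eu u1 y1 x2 <= eu u1 x1 x2) &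
      (forall y2, avail2 r y2 -> eu u2 x1 y2 <= eu u2 x1 x2)].

(* Histories of realized action profiles, and (behavioral) strategies of the
   repeated game. *)
Definition hist := seq (A1 * A2).
Definition strat1 := hist -> {ffun A1 -> R}.
Definition strat2 := hist -> {ffun A2 -> R}.

Definition avail_strat1 (r : regime) (s : strat1) : Prop := forall h, avail1 r (s h).
Definition avail_strat2 (r : regime) (s : strat2) : Prop := forall h, avail2 r (s h).

Fixpoint rpay (u : A1 -> A2 -> R) (s1 : strat1) (s2 : strat2) (n : nat) (h : hist) : R :=
  match n with
  | 0 => 0
  | n'.+1 => \sum_(a1 : A1) \sum_(a2 : A2)
               s1 h a1 * s2 h a2 * (u a1 a2 + rpay u s1 s2 n' (rcons h (a1, a2)))
  end.

Definition gpay (u : A1 -> A2 -> R) (s1 : strat1) (s2 : strat2) (n : nat) : R :=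
  rpay u s1 s2 n [::].

Definition repNash (r : regime) (u1 u2 : A1 -> A2 -> R) (n : nat)
    (s1 : strat1) (s2 : strat2) : Prop :=
  (forall t1, avail_strat1 r t1 -> gpay u1 t1 s2 n <= gpay u1 s1 s2 n) /\
  (forall t2, avail_strat2 r t2 -> gpay u2 s1 t2 n <= gpay u2 s1 s2 n).

Definition cont1 (s : strat1) (h : hist) : strat1 := fun h' => s (h ++ h').
Definition cont2 (s : strat2) (h : hist) : strat2 := fun h' => s (h ++ h').

Definition SPE (r : regime) (u1 u2 : A1 -> A2 -> R) (T : nat)
    (s1 : strat1) (s2 : strat2) : Prop :=
  [/\ avail_strat1 r s1, avail_strat2 r s2 &
      forall h : hist, (size h < T)%N ->
        repNash r u1 u2 (T - size h) (cont1 s1 h) (cont2 s2 h)].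

Definition locally_subopt (r : regime) (u1 u2 : A1 -> A2 -> R) (T : nat)
    (s1 : strat1) (s2 : strat2) : Prop :=
  exists h : hist, (size h < T)%N /\ ~ stageNash r u1 u2 (s1 h) (s2 h).

Definition in_GLS (r : regime) (u1 u2 : A1 -> A2 -> R) : Prop :=
  exists T : nat, (1 <= T)%N /\
    exists (s1 : strat1) (s2 : strat2),
      SPE r u1 u2 T s1 s2 /\ locally_subopt r u1 u2 T s1 s2.

End Games.

From mathcomp Require Import all_boot all_order all_algebra.
From mathcomp Require Import reals.
Import Order.TTheory GRing.Theory Num.Theory.
Set Implicit Arguments. Unset Strict Implicit. Unset Printing Implicit Defensive.
Local Open Scope ring_scope.

(* G_LS^{p,p} is contained in G_LS^{m,p}: the very same profile witnesses
   membership in both classes.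

   Player 2 is restricted to actions in both regimes, so only the deviations
   of player 1 change when he is allowed to mix.  The key fact is that against
   an opponent who plays a pure action after every history, every mixed
   strategy of player 1 is weakly dominated, from any history on, by a pure
   strategy ([pure_dominates_mixed]): by induction on the horizon, play a
   maximizer of "stage payoff + dominating continuation value" now, and glue
   the pure continuations obtained from the induction hypothesis.  Hence a
   pure-pure Nash equilibrium of G(n) with a pure player 2 is a mixed-pure
   Nash equilibrium ([repNash_PP_MP]), and a pure-pure SPE is a mixed-pure SPE
   ([SPE_PP_MP]).  Conversely a mixed-pure stage Nash profile of pure actions
   is a pure-pure stage Nash profile ([stageNash_MP_PP]), so local
   suboptimality is preserved as well. *)

Section PureOpponent.
Variables (R : realType) (A1 A2 : finType).

Lemma sum_pt (A : finType) (b : A) (F : A -> R) :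
  \sum_a pt R b a * F a = F b.
Proof.
rewrite (bigD1 b) //= big1 ?addr0; first by rewrite ffunE eqxx mul1r.
by move=> a /negbTE nab; rewrite ffunE nab mul0r.
Qed.

Lemma pt_mixed (A : finType) (b : A) : is_mixed (pt R b).
Proof.
split; first by move=> a; rewrite ffunE; case: (a == b).
by rewrite -(sum_pt b (fun _ => 1)); apply: eq_bigr => a _; rewrite mulr1.
Qed.

Lemma avail_pure_mixed (A : finType) (x : {ffun A -> R}) :
  avail false x -> avail true x.
Proof. by move=> [a ->]; exact: pt_mixed. Qed.

Lemma rpay_ext (u : A1 -> A2 -> R) (s1 t1 : strat1 R A1 A2)
    (s2 : strat2 R A1 A2) (n : nat) (h : hist A1 A2) :
  (forall h', (size h <= size h')%N -> s1 h' = t1 h') ->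
  rpay u s1 s2 n h = rpay u t1 s2 n h.
Proof.
elim: n h => [//|n IH] h eq_s /=.
rewrite eq_s //; apply: eq_bigr => a _; apply: eq_bigr => b _.
rewrite (IH (rcons h (a, b))) // => h' le_h'; apply: eq_s.
by move: le_h'; rewrite size_rcons; apply: leq_trans.
Qed.

Lemma rpay_pure_opponent (u : A1 -> A2 -> R) (s1 : strat1 R A1 A2)
    (s2 : strat2 R A1 A2) (n : nat) (h : hist A1 A2) (b : A2) :
  s2 h = pt R b ->
  rpay u s1 s2 n.+1 h =
    \sum_a s1 h a * (u a b + rpay u s1 s2 n (rcons h (a, b))).
Proof.
move=> s2h /=; rewrite s2h; apply: eq_bigr => a _.
rewrite -(sum_pt b (fun c => s1 h a * (u a c + rpay u s1 s2 n (rcons h (a, c))))).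
by apply: eq_bigr => c _; rewrite -mulrA mulrCA.
Qed.

Variables (a0 : A1) (u : A1 -> A2 -> R) (s2 : strat2 R A1 A2).
Hypothesis s2_pure : forall h, is_pure (s2 h).

Lemma pure_dominates_mixed (n : nat) (h : hist A1 A2) (t1 : strat1 R A1 A2) :
  (forall h', is_mixed (t1 h')) ->
  exists p1 : strat1 R A1 A2,
    (forall h', is_pure (p1 h')) /\ rpay u t1 s2 n h <= rpay u p1 s2 n h.
Proof.
move=> t1_mixed; elim: n h => [|n IH] h.
  by exists (fun _ => pt R a0); split => // ?; exists a0.
have [b s2h] := s2_pure h.
have [P P_spec] := fin_all_exists (fun a => IH (rcons h (a, b))).
pose value a := u a b + rpay u (P a) s2 n (rcons h (a, b)).
have [best _ best_max] := @arg_maxP _ _ _ a0 xpredT value isT.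
(* Play [best] now, then follow the dominating continuation of [best]. *)
pose p1 : strat1 R A1 A2 := fun h' => if h' == h then pt R best else P best h'.
exists p1; split.
  by move=> h'; rewrite /p1; case: (h' == h); [exists best | exact: (P_spec best).1].
rewrite !(rpay_pure_opponent u _ n s2h) [p1 h]/p1 eqxx sum_pt.
have -> : rpay u p1 s2 n (rcons h (best, b)) = rpay u (P best) s2 n (rcons h (best, b)).
  apply: rpay_ext => h' le_h'; rewrite /p1; case: eqP => // eq_h'.
  by move: le_h'; rewrite eq_h' size_rcons ltnn.
apply: (@le_trans _ _ (\sum_a t1 h a * value best)).
  apply: ler_sum => a _; apply: ler_wpM2l; first exact: (t1_mixed h).1.
  by apply: le_trans (best_max a isT); rewrite /value lerD2l; exact: (P_spec a).2.
by rewrite -mulr_suml (t1_mixed h).2 mul1r.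
Qed.

End PureOpponent.

Section Regimes.
Variables (R : realType) (A1 A2 : finType) (a0 : A1) (u1 u2 : A1 -> A2 -> R).

(* A pure-pure Nash equilibrium of G(n) is a mixed-pure one: player 2's
   deviation set is unchanged, and player 1's mixed deviations are dominated by
   pure ones since player 2 plays purely. *)
Lemma repNash_PP_MP (n : nat) (s1 : strat1 R A1 A2) (s2 : strat2 R A1 A2) :
  avail_strat2 PP s2 -> repNash PP u1 u2 n s1 s2 -> repNash MP u1 u2 n s1 s2.
Proof.
move=> s2_pure [best1 best2]; split => // t1 t1_mixed.
have [p1 [p1_pure dom]] := pure_dominates_mixed a0 u1 s2_pure n [::] t1_mixed.
exact: le_trans dom (best1 p1 p1_pure).
Qed.

Lemma SPE_PP_MP (T : nat) (s1 : strat1 R A1 A2) (s2 : strat2 R A1 A2) :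
  SPE PP u1 u2 T s1 s2 -> SPE MP u1 u2 T s1 s2.
Proof.
move=> [s1_pure s2_pure subgame]; split => //.
  by move=> h; exact/avail_pure_mixed/s1_pure.
move=> h lt_h; apply: repNash_PP_MP (subgame h lt_h).
by move=> h'; exact: s2_pure.
Qed.

Lemma stageNash_MP_PP (x1 : {ffun A1 -> R}) (x2 : {ffun A2 -> R}) :
  avail1 PP x1 -> stageNash MP u1 u2 x1 x2 -> stageNash PP u1 u2 x1 x2.
Proof.
move=> x1_pure [_ x2_pure best1 best2]; split => // y1 y1_pure.
exact/best1/avail_pure_mixed.
Qed.

End Regimes.

Theorem mainTheorem8 (R : realType) (A1 A2 : finType) (a1 : A1) (a2 : A2)
    (u1 u2 : A1 -> A2 -> R) :
  in_GLS PP u1 u2 -> in_GLS MP u1 u2.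
Proof.
move=> [T [T_pos [s1 [s2 [spe [h [lt_h not_nash]]]]]]].
exists T; split => //; exists s1, s2; split; first exact: (SPE_PP_MP a1 spe).
exists h; split => // nash; apply: not_nash.
by apply: stageNash_MP_PP nash; case: spe.
Qed.
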